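(* The trigonometric polynomial $f(\alpha,\beta,\gamma)=2^{3/2}-\cos(\alpha+\beta+\gamma)-\cos(-\alpha+\beta+\gamma)-\cos(\alpha-\beta+\gamma)+\cos(\alpha+\beta-\gamma)$ is extremal in the class $\sigma(1,1,1)$.
   Context: $\sigma(1,1,1)$ is the set of trigonometric polynomials $f(\alpha,\beta,\gamma)=\sum_{|k|,|\ell|,|m|\le1}q(k,\ell,m)e^{i(k\alpha+\ell\beta+m\gamma)}$ with $f(\alpha,\beta,\gamma)\ge0$ for all real $\alpha,\beta,\gamma$. An element $f$ of a convex cone $U$ is extremal in $U$ if whenever $f=g+h$ with $g,h\in U$, both $g$ and $h$ are nonnegative multiples of $f$. *)

From Stdlib Require Import Reals List ZArith.
From Coquelicot Require Import Coquelicot.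
Import ListNotations.
Open Scope R_scope.

Definition freqs1 : list Z := [(-1)%Z; 0%Z; 1%Z].
Definition triples111 : list (Z * Z * Z) :=
  flat_map (fun k => flat_map (fun l => map (fun m => (k, l, m)) freqs1) freqs1) freqs1.

Definition cexpi (t : R) : C := (cos t, sin t).

Definition trig_poly111 (q : Z -> Z -> Z -> C) (a b g : R) : C :=
  fold_right Cplus (RtoC 0)
    (map (fun t => let '(k, l, m) := t in
            Cmult (q k l m) (cexpi (IZR k * a + IZR l * b + IZR m * g)))
         triples111).

(* sigma(1,1,1): nonnegative trigonometric polynomials of degree <= 1 in each
   variable.  Being nonnegative, such an f is real-valued; we represent it as a
   real function of (alpha, beta, gamma). *)
Definition sigma111 (f : R -> R -> R -> R) : Prop :=
  (exists q : Z -> Z -> Z -> C,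
      forall a b g, RtoC (f a b g) = trig_poly111 q a b g)
  /\ (forall a b g, 0 <= f a b g).

Definition extremal_in (U : (R -> R -> R -> R) -> Prop) (f : R -> R -> R -> R) : Prop :=
  U f /\
  forall g h, U g -> U h -> (forall a b c, f a b c = g a b c + h a b c) ->
    (exists lam, 0 <= lam /\ forall a b c, g a b c = lam * f a b c) /\
    (exists mu, 0 <= mu /\ forall a b c, h a b c = mu * f a b c).

Definition f_prop7 (a b g : R) : R :=
  Rpower 2 (3/2) - cos (a + b + g) - cos (- a + b + g) - cos (a - b + g)
  + cos (a + b - g).

(* A real trigonometric polynomial of degree at most 1 in each variable is a
   trilinear form, with 27 real coefficients, in the vectors
   (1, sqrt 2 cos t, sqrt 2 sin t) of its three variables.  The function
   f_prop7 vanishes at eight points, where these vectors have entries 1 and -1.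
   If g is in sigma(1,1,1) and f_prop7 - g is too, then 0 <= g <= f_prop7, so g
   vanishes at the eight points; being global minima of g, they are also
   critical points of g in each variable.  These 32 linear conditions leave
   only the line of coefficients spanned by f_prop7, so g = lam * f_prop7, and
   lam >= 0 because f_prop7 is positive somewhere. *)

From Stdlib Require Import Reals Lra Lia List ZArith FunctionalExtensionality.
From Coquelicot Require Import Coquelicot.
Open Scope R_scope.

Inductive trig_basis := Const | Cos | Sin.

Local Notation vec := (trig_basis -> R).
Local Notation tensor := (trig_basis -> trig_basis -> trig_basis -> R).

Definition sum3 (F : vec) : R := F Const + F Cos + F Sin.

Definition lin (u v : vec) : R := sum3 (fun i => u i * v i).

Definition tri (w : tensor) (x y z : vec) : R :=
  sum3 (fun i => sum3 (fun j => sum3 (fun k => w i j k * x i * y j * z k))).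

(* The scaling by [sqrt 2] makes the zeros of [f_prop7] have coordinates [1] and [-1]. *)
Definition ev (t : R) (i : trig_basis) : R :=
  match i with Const => 1 | Cos => sqrt 2 * cos t | Sin => sqrt 2 * sin t end.

Definition ev_deriv (v : vec) (i : trig_basis) : R :=
  match i with Const => 0 | Cos => - v Sin | Sin => v Cos end.

Lemma sqrt2_pos : 0 < sqrt 2.
Proof. apply sqrt_lt_R0; lra. Qed.

Lemma sqrt2_sq : sqrt 2 * sqrt 2 = 2.
Proof. apply sqrt_sqrt; lra. Qed.

Lemma derivable_pt_lim_min (phi : R -> R) (x0 l : R) :
  derivable_pt_lim phi x0 l -> (forall x, phi x0 <= phi x) -> l = 0.
Proof.
  intros Hd Hmin.
  pose (pr := exist (fun l => derivable_pt_abs phi x0 l) l Hd : derivable_pt phi x0).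
  rewrite <- (derive_pt_eq_0 phi x0 l pr Hd).
  apply (deriv_minimum phi (x0 - 1) (x0 + 1)); try lra.
  intros x _ _; apply Hmin.
Qed.

Lemma lin_ev_derivative (u : vec) (t : R) :
  derivable_pt_lim (fun x => lin u (ev x)) t (lin u (ev_deriv (ev t))).
Proof.
  apply is_derive_Reals; unfold lin, sum3, ev, ev_deriv.
  auto_derive; [easy | ring].
Qed.

Lemma lin_critical (u : vec) (t : R) :
  (forall x, 0 <= lin u (ev x)) -> lin u (ev t) = 0 -> lin u (ev_deriv (ev t)) = 0.
Proof.
  intros Hnn H0.
  apply (derivable_pt_lim_min _ t _ (lin_ev_derivative u t)).
  intros x; rewrite H0; apply Hnn.
Qed.

Definition critical_at (w : tensor) (x y z : vec) : Prop :=
  tri w x y z = 0 /\ tri w (ev_deriv x) y z = 0 /\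
  tri w x (ev_deriv y) z = 0 /\ tri w x y (ev_deriv z) = 0.

Lemma tri_slice_l w x y z :
  tri w x y z = lin (fun i => sum3 (fun j => sum3 (fun k => w i j k * y j * z k))) x.
Proof. cbv [tri lin sum3]; ring. Qed.

Lemma tri_slice_m w x y z :
  tri w x y z = lin (fun j => sum3 (fun i => sum3 (fun k => w i j k * x i * z k))) y.
Proof. cbv [tri lin sum3]; ring. Qed.

Lemma tri_slice_r w x y z :
  tri w x y z = lin (fun k => sum3 (fun i => sum3 (fun j => w i j k * x i * y j))) z.
Proof. cbv [tri lin sum3]; ring. Qed.

Lemma tri_ext w w' x y z :
  (forall i j k, w i j k = w' i j k) -> tri w x y z = tri w' x y z.
Proof. intros H; cbv [tri sum3]; rewrite !H; reflexivity. Qed.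

Lemma tri_critical w a b c :
  (forall a b c, 0 <= tri w (ev a) (ev b) (ev c)) ->
  tri w (ev a) (ev b) (ev c) = 0 -> critical_at w (ev a) (ev b) (ev c).
Proof.
  intros Hnn H0; repeat split; [exact H0 | ..].
  - rewrite tri_slice_l; apply lin_critical; [intros x | ];
      rewrite <- tri_slice_l; [apply Hnn | exact H0].
  - rewrite tri_slice_m; apply lin_critical; [intros x | ];
      rewrite <- tri_slice_m; [apply Hnn | exact H0].
  - rewrite tri_slice_r; apply lin_critical; [intros x | ];
      rewrite <- tri_slice_r; [apply Hnn | exact H0].
Qed.

Definition sgn (b : bool) : R := if b then -1 else 1.

Definition sign_vec (p q : bool) (i : trig_basis) : R :=
  match i with Const => 1 | Cos => sgn p | Sin => sgn q end.

Definition corner (p q : bool) : R :=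
  match p, q with
  | false, false => PI / 4
  | true, false => 3 * (PI / 4)
  | false, true => - (PI / 4)
  | true, true => - (3 * (PI / 4))
  end.

Lemma ev_corner p q : ev (corner p q) = sign_vec p q.
Proof.
  pose proof sqrt2_pos.
  apply functional_extensionality; intros [].
  - reflexivity.
  - destruct p, q; cbn [ev corner sign_vec sgn];
      rewrite ?cos_neg, ?cos_PI4, ?cos_3PI4; field; lra.
  - destruct p, q; cbn [ev corner sign_vec sgn];
      rewrite ?sin_neg, ?sin_PI4, ?sin_3PI4; field; lra.
Qed.

Definition f_prop7_tensor (i j k : trig_basis) : R :=
  match i, j, k with
  | Const, Const, Const => 1
  | Cos, Cos, Cos => - / 4
  | Cos, Sin, Sin => / 4
  | Sin, Cos, Sin => / 4
  | Sin, Sin, Cos => - / 4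
  | _, _, _ => 0
  end.

(* [(p, q, r) |-> (sign_vec p q, sign_vec r (p+q+r), sign_vec (p+r) (1+q+r))],
   with [+] computed in [Z/2], enumerates the eight zeros of [f_prop7]. *)
Lemma coeffs_of_critical_zeros w :
  (forall p q r : bool,
     critical_at w (sign_vec p q) (sign_vec r (xorb (xorb p q) r))
                   (sign_vec (xorb p r) (negb (xorb q r)))) ->
  forall i j k, w i j k = w Const Const Const * f_prop7_tensor i j k.
Proof.
  intros H.
  pose proof (H false false false); pose proof (H false false true);
  pose proof (H false true false); pose proof (H false true true);
  pose proof (H true false false); pose proof (H true false true);
  pose proof (H true true false); pose proof (H true true true).
  clear H; cbv [critical_at tri sum3 ev_deriv sign_vec sgn xorb negb] in *.
  intros [] [] []; cbv [f_prop7_tensor]; lra.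
Qed.

Lemma Rpower_2_3_2 : Rpower 2 (3 / 2) = 2 * sqrt 2.
Proof.
  replace (3 / 2) with (1 + / 2) by field.
  rewrite Rpower_plus, Rpower_1, Rpower_sqrt by lra; reflexivity.
Qed.

Lemma f_prop7_cos_form a b c :
  f_prop7 a b c = 2 * sqrt 2 - 2 * (cos a * cos (b + c) + sin a * sin (b - c)).
Proof.
  unfold f_prop7; rewrite Rpower_2_3_2.
  repeat rewrite ?cos_plus, ?sin_plus, ?cos_minus, ?sin_minus, ?cos_neg, ?sin_neg.
  ring.
Qed.

Lemma f_prop7_tri a b c :
  f_prop7 a b c = 2 * sqrt 2 * tri f_prop7_tensor (ev a) (ev b) (ev c).
Proof.
  rewrite f_prop7_cos_form, cos_plus, sin_minus.
  cbv [tri sum3 f_prop7_tensor ev].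
  set (s := sqrt 2); pose proof sqrt2_sq as Hs; fold s in Hs.
  transitivity (2 * s - (s * s) * (s * s) / 2 *
                (cos a * (cos b * cos c - sin b * sin c)
                 + sin a * (sin b * cos c - cos b * sin c)));
    [rewrite Hs | ]; field.
Qed.

Lemma f_prop7_nonneg a b c : 0 <= f_prop7 a b c.
Proof.
  rewrite f_prop7_cos_form.
  set (C := cos (b + c)); set (D := sin (b - c)); set (X := cos a * C + sin a * D).
  assert (HC : C * C <= 1) by (pose proof (sin2_cos2 (b + c)); unfold C, Rsqr in *; nra).
  assert (HD : D * D <= 1) by (pose proof (sin2_cos2 (b - c)); unfold D, Rsqr in *; nra).
  assert (HX : X * X <= 2).
  { pose proof (sin2_cos2 a) as Ha; unfold Rsqr in Ha.
    assert (X * X + (cos a * D - sin a * C) * (cos a * D - sin a * C) = C * C + D * D)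
      by (transitivity ((sin a * sin a + cos a * cos a) * (C * C + D * D));
          [unfold X; ring | rewrite Ha; ring]).
    pose proof (Rle_0_sqr (cos a * D - sin a * C)); unfold Rsqr in *; lra. }
  pose proof sqrt2_sq; pose proof sqrt2_pos; nra.
Qed.

Lemma f_prop7_pos_at_0 : 0 < f_prop7 0 0 0.
Proof.
  rewrite f_prop7_cos_form, Rplus_0_r, Rminus_0_r, cos_0, sin_0.
  assert (1 < sqrt 2) by (rewrite <- sqrt_1; apply sqrt_lt_1; lra).
  lra.
Qed.

Lemma f_prop7_vanishes p q r :
  f_prop7 (corner p q) (corner r (xorb (xorb p q) r))
          (corner (xorb p r) (negb (xorb q r))) = 0.
Proof.
  rewrite f_prop7_tri, !ev_corner.
  destruct p, q, r; cbv [tri sum3 f_prop7_tensor sign_vec sgn xorb negb]; field.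
Qed.

Definition tri_poly (g : R -> R -> R -> R) : Prop :=
  exists w, forall a b c, g a b c = tri w (ev a) (ev b) (ev c).

Lemma tri_poly_ext g h : (forall a b c, g a b c = h a b c) -> tri_poly h -> tri_poly g.
Proof. intros Hgh [w Hw]; exists w; intros; rewrite Hgh; apply Hw. Qed.

Lemma tri_poly_0 : tri_poly (fun _ _ _ => 0).
Proof. exists (fun _ _ _ => 0); intros; cbv [tri sum3]; ring. Qed.

Lemma tri_poly_add g h :
  tri_poly g -> tri_poly h -> tri_poly (fun a b c => g a b c + h a b c).
Proof.
  intros [w1 H1] [w2 H2]; exists (fun i j k => w1 i j k + w2 i j k).
  intros; rewrite H1, H2; cbv [tri sum3]; ring.
Qed.

Lemma tri_poly_scale r g : tri_poly g -> tri_poly (fun a b c => r * g a b c).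
Proof.
  intros [w Hw]; exists (fun i j k => r * w i j k).
  intros; rewrite Hw; cbv [tri sum3]; ring.
Qed.

Definition cos_vec (k : R) (i : trig_basis) : R :=
  match i with Const => 1 - k * k | Cos => k * k / sqrt 2 | Sin => 0 end.

Definition sin_vec (k : R) (i : trig_basis) : R :=
  match i with Sin => k / sqrt 2 | _ => 0 end.

Lemma cos_sin_lin (k t : R) : k = -1 \/ k = 0 \/ k = 1 ->
  cos (k * t) = lin (cos_vec k) (ev t) /\ sin (k * t) = lin (sin_vec k) (ev t).
Proof.
  pose proof sqrt2_pos.
  intros [-> | [-> | ->]]; cbv [lin sum3 cos_vec sin_vec ev].
  - replace (-1 * t) with (- t) by ring; rewrite cos_neg, sin_neg; split; field; lra.
  - rewrite Rmult_0_l, cos_0, sin_0; split; field; lra.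
  - rewrite Rmult_1_l; split; field; lra.
Qed.

Lemma tri_poly_cos_sin (k l m : R) :
  k = -1 \/ k = 0 \/ k = 1 -> l = -1 \/ l = 0 \/ l = 1 -> m = -1 \/ m = 0 \/ m = 1 ->
  tri_poly (fun a b c => cos (k * a + l * b + m * c)) /\
  tri_poly (fun a b c => sin (k * a + l * b + m * c)).
Proof.
  intros Hk Hl Hm; pose (C := cos_vec); pose (S := sin_vec).
  split;
    [exists (fun i j n => C k i * C l j * C m n - S k i * S l j * C m n
                        - S k i * C l j * S m n - C k i * S l j * S m n)
    |exists (fun i j n => S k i * C l j * C m n + C k i * S l j * C m n
                        + C k i * C l j * S m n - S k i * S l j * S m n)];
  intros a b c; subst C S; repeat rewrite ?cos_plus, ?sin_plus;
  destruct (cos_sin_lin k a Hk) as [-> ->], (cos_sin_lin l b Hl) as [-> ->],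
    (cos_sin_lin m c Hm) as [-> ->];
  cbv [tri lin sum3]; ring.
Qed.

Definition freq_in_range (t : Z * Z * Z) : Prop :=
  let '(k, l, m) := t in (-1 <= k <= 1 /\ -1 <= l <= 1 /\ -1 <= m <= 1)%Z.

Lemma IZR_in_range (k : Z) : (-1 <= k <= 1)%Z -> IZR k = -1 \/ IZR k = 0 \/ IZR k = 1.
Proof.
  intros Hk; assert (k = -1 \/ k = 0 \/ k = 1)%Z as [-> | [-> | ->]] by lia;
    [left | right; left | right; right]; reflexivity.
Qed.

Definition trig_poly_on (L : list (Z * Z * Z)) (q : Z -> Z -> Z -> C) (a b g : R) : C :=
  fold_right Cplus (RtoC 0)
    (map (fun t => let '(k, l, m) := t in
            Cmult (q k l m) (cexpi (IZR k * a + IZR l * b + IZR m * g))) L).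

Lemma tri_poly_re_trig_poly_on L q :
  List.Forall freq_in_range L -> tri_poly (fun a b c => fst (trig_poly_on L q a b c)).
Proof.
  induction 1 as [| [[k l] m] L [Hk [Hl Hm]] _ IH]; [exact tri_poly_0 |].
  destruct (tri_poly_cos_sin (IZR k) (IZR l) (IZR m)) as [Hcos Hsin];
    try apply IZR_in_range; try assumption.
  apply tri_poly_add; [| exact IH].
  apply (tri_poly_ext _ (fun a b c =>
    fst (q k l m) * cos (IZR k * a + IZR l * b + IZR m * c)
    + - snd (q k l m) * sin (IZR k * a + IZR l * b + IZR m * c))).
  - intros a b c; cbn; ring.
  - apply tri_poly_add; apply tri_poly_scale; assumption.
Qed.

Lemma sigma111_tri_poly g : sigma111 g -> tri_poly g.
Proof.
  intros [[q Hq] _].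
  apply (tri_poly_ext g (fun a b c => fst (trig_poly_on triples111 q a b c))).
  - intros a b c; change (trig_poly_on triples111 q a b c) with (trig_poly111 q a b c).
    rewrite <- Hq; reflexivity.
  - apply tri_poly_re_trig_poly_on.
    repeat (constructor; [cbn; lia |]); constructor.
Qed.

Definition f_prop7_fourier (k l m : Z) : C :=
  match k, l, m with
  | 0, 0, 0 => RtoC (Rpower 2 (3 / 2))
  | 1, 1, 1 | -1, -1, -1 | -1, 1, 1 | 1, -1, -1 | 1, -1, 1 | -1, 1, -1 => RtoC (-1 / 2)
  | 1, 1, -1 | -1, -1, 1 => RtoC (1 / 2)
  | _, _, _ => RtoC 0
  end%Z.

Lemma f_prop7_sigma111 : sigma111 f_prop7.
Proof.
  split; [exists f_prop7_fourier | exact f_prop7_nonneg].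
  intros a b c; unfold trig_poly111, triples111, freqs1, cexpi; cbn.
  unfold f_prop7, RtoC; rewrite Rpower_2_3_2.
  assert (Hneg : forall x, -1 * x = - x) by (intros; ring).
  rewrite ?Hneg, ?Rmult_1_l, ?Rmult_0_l, ?Rplus_0_l, ?Rplus_0_r, ?cos_0, ?sin_0.
  repeat rewrite ?cos_plus, ?sin_plus, ?cos_minus, ?sin_minus, ?cos_neg, ?sin_neg.
  apply injective_projections; cbn; field.
Qed.

Lemma tri_poly_below_f_prop7 g :
  tri_poly g -> (forall a b c, 0 <= g a b c <= f_prop7 a b c) ->
  exists lam, forall a b c, g a b c = lam * f_prop7 a b c.
Proof.
  intros [w Hw] Hg.
  assert (Hcoef : forall i j k, w i j k = w Const Const Const * f_prop7_tensor i j k).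
  { apply coeffs_of_critical_zeros; intros p q r; rewrite <- !ev_corner.
    apply tri_critical; [intros a b c | ]; rewrite <- Hw; [apply Hg |].
    pose proof (f_prop7_vanishes p q r); pose proof (Hg (corner p q)
      (corner r (xorb (xorb p q) r)) (corner (xorb p r) (negb (xorb q r)))); lra. }
  exists (w Const Const Const / (2 * sqrt 2)); intros a b c.
  rewrite Hw, f_prop7_tri, (tri_ext _ _ _ _ _ Hcoef).
  pose proof sqrt2_pos; cbv [tri sum3]; field; lra.
Qed.

Lemma sigma111_below_f_prop7 g :
  sigma111 g -> (forall a b c, g a b c <= f_prop7 a b c) ->
  exists lam, 0 <= lam /\ forall a b c, g a b c = lam * f_prop7 a b c.
Proof.
  intros Hg Hle.
  destruct (tri_poly_below_f_prop7 g) as [lam Hlam];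
    [apply sigma111_tri_poly, Hg | intros a b c; split; [apply Hg | apply Hle] |].
  exists lam; split; [| exact Hlam].
  pose proof (proj2 Hg 0 0 0) as H0; rewrite Hlam in H0.
  pose proof f_prop7_pos_at_0; nra.
Qed.

Theorem proposition7 : extremal_in sigma111 f_prop7.
Proof.
  split; [exact f_prop7_sigma111 |].
  intros g h Hg Hh Hsum; split; apply sigma111_below_f_prop7; try assumption;
    intros a b c; rewrite Hsum.
  - pose proof (proj2 Hh a b c); lra.
  - pose proof (proj2 Hg a b c); lra.
Qed.
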